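(* Let $d\ge1$. For all disjoint rectangles $P,Q\subseteq[0,1)^d$ that are translates of each other, the rectangle transposition $\tau_{P,Q}$ is a finite product of restricted shuffles in $\operatorname{Rec}_d$.
   Context: A rectangle in $\mathbb{R}^d$ is a set $\prod_{i=1}^d[a_i,b_i)$ with $a_i<b_i$ real. $\operatorname{Rec}_d$ is the group of bijections $f$ of $[0,1)^d$ for which there is a finite partition of $[0,1)^d$ into rectangles on each of which $f$ is a translation. For disjoint rectangles $P,Q$ with $Q=P+v$, $\tau_{P,Q}$ is translation by $v$ on $P$, by $-v$ on $Q$, and the identity elsewhere. A restricted shuffle: for a rectangle $P=\prod_j[a_j,b_j)\subseteq[0,1)^d$, an index $i$ and $c\in(a_i,b_i)$, let $P'$ (resp. $P''$) be obtained from $P$ by replacing $[a_i,b_i)$ by $[a_i,c)$ (resp. $[c,b_i)$); the restricted shuffle is translation by $(b_i-c)e_i$ on $P'$, by $-(c-a_i)e_i$ on $P''$, and the identity outside $P$ ($e_i$ the standard basis vector). *)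

From mathcomp Require Import all_boot all_order all_algebra.
From mathcomp Require Import reals.
Set Implicit Arguments. Unset Strict Implicit. Unset Printing Implicit Defensive.
Import Order.TTheory GRing.Theory Num.Theory.
Local Open Scope ring_scope.

Section Defs.
Variables (R : realType) (d : nat).
Definition point := 'I_d -> R.

Definition in_rect (a b : point) (x : point) : bool :=
  [forall i, (a i <= x i) && (x i < b i)].

Definition is_rect (a b : point) : Prop := forall i, a i < b i.

Definition in_cube (x : point) : bool := in_rect (fun _ => 0) (fun _ => 1) x.

Definition rect_in_cube (a b : point) : Prop :=
  forall x, in_rect a b x -> in_cube x.

Definition padd (x v : point) : point := fun j => x j + v j.
Definition psub (x v : point) : point := fun j => x j - v j.

Definition shift_e (i : 'I_d) (t : R) (x : point) : point :=
  fun j => if j == i then x j + t else x j.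

Definition tau (a b v : point) (x : point) : point :=
  if in_rect a b x then padd x v
  else if in_rect (padd a v) (padd b v) x then psub x v
  else x.

Record shuffle_data := ShuffleData {
  sh_a : point; sh_b : point; sh_i : 'I_d; sh_c : R;
  sh_rect : is_rect sh_a sh_b;
  sh_in_cube : rect_in_cube sh_a sh_b;
  sh_c_gt : sh_a sh_i < sh_c;
  sh_c_lt : sh_c < sh_b sh_i }.

Definition restricted_shuffle (s : shuffle_data) (x : point) : point :=
  let a := sh_a s in let b := sh_b s in let i := sh_i s in let c := sh_c s in
  if in_rect a b x then
    (if x i < c then shift_e i (b i - c) x else shift_e i (- (c - a i)) x)
  else x.

Definition shuffle_product (s : seq shuffle_data) : point -> point :=
  foldr (fun sh f => restricted_shuffle sh \o f) id s.
End Defs.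

From mathcomp Require Import all_boot all_order all_algebra.
From mathcomp Require Import boolp reals lra.
Import Order.TTheory GRing.Theory Num.Theory.
Local Open Scope ring_scope.
Set Implicit Arguments. Unset Strict Implicit. Unset Printing Implicit Defensive.

(* If [Q = P + t e_i] with [|t|] at least the width of [P] in direction [i],
   [tau_{P,Q}] is one or two restricted shuffles of the box spanned by [P] and
   [Q]. A general translation [v] whose every nonzero coordinate separates [P]
   from [Q] reduces to this case by conjugation:
   [tau_{P,P+v} = tau_{P+w,P+v} o tau_{P,P+w} o tau_{P+w,P+v}], where [w] is
   [v] with one coordinate set to zero. Finally, a coordinate [j] in which
   [0 < |v_j| < b_j - a_j] is made separating by cutting [P] into slices of
   width at most [|v_j|], since [tau_P] is the product of the [tau]'s of the
   pieces of a partition of [P]. *)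

Section Transpositions.
Variables (R : realType) (d : nat).
Local Notation pt := (point R d).
Implicit Types (a b p q v w x y : pt) (i j l : 'I_d).

Lemma in_rectP a b x : reflect (forall l, a l <= x l < b l) (in_rect a b x).
Proof. exact: forallP. Qed.

Lemma psub_padd x v : psub (padd x v) v = x.
Proof. by apply/funext => l; rewrite /psub /padd addrK. Qed.

Lemma in_rect_padd a b v y :
  in_rect (padd a v) (padd b v) y = in_rect a b (psub y v).
Proof. by apply: eq_forallb => l; rewrite /padd /psub lerBrDr ltrBlDr. Qed.

Lemma is_rect_padd a b v : is_rect a b -> is_rect (padd a v) (padd b v).
Proof. by move=> hab l; rewrite /padd ltrD2r. Qed.

Lemma tauE a b v y : tau a b v y =
  if in_rect a b y then padd y v
  else if in_rect a b (psub y v) then psub y v else y.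
Proof. by rewrite /tau in_rect_padd. Qed.

Definition disjoint_shift a b v :=
  forall x, ~~ (in_rect a b x && in_rect (padd a v) (padd b v) x).

Lemma disjoint_shiftP a b v y : disjoint_shift a b v ->
  in_rect a b y -> in_rect a b (psub y v) = false.
Proof. by move=> hD hy; have := hD y; rewrite hy in_rect_padd => /negbTE. Qed.

Lemma disjoint_shift_sep a b v l : b l - a l <= `|v l| -> disjoint_shift a b v.
Proof.
move=> hl x; apply/negP => /andP[/in_rectP/(_ l) h1 /in_rectP/(_ l)].
rewrite /padd => h2.
by case: (lerP 0 (v l)) => hv; [rewrite ger0_norm in hl | rewrite ltr0_norm in hl]; lra.
Qed.

Definition unit_box a b := forall l, 0 <= a l /\ b l <= 1.

Lemma rect_in_cubeP a b : is_rect a b -> rect_in_cube a b <-> unit_box a b.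
Proof.
move=> hab; split => [hc l | hu x /in_rectP hx]; last first.
  by apply/in_rectP => l; have [? ?] := hu l; have /andP[? ?] := hx l; apply/andP; split; lra.
have ha : in_rect a b a by apply/in_rectP => j; rewrite lexx hab.
have /in_rectP /(_ l) /andP[ha0 _] := hc a ha; split => //.
rewrite leNgt; apply/negP => hb.
(* raising the [l]-th coordinate of [a] to [max 1 a_l] stays in [[a, b)] but leaves the cube *)
pose t := if a l <= 1 then 1 else a l.
pose x := fun j => if j == l then t else a j.
have hx : in_rect a b x.
  apply/in_rectP => j; rewrite /x; case: eqVneq => [->|_]; last by rewrite lexx hab.
  by have := hab l; rewrite /t; case: ifP => h ?; apply/andP; split; lra.
have /in_rectP /(_ l) := hc x hx; rewrite /x eqxx /t.
by case: ifP => h; lra.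
Qed.

Definition transposable a b v := [/\ is_rect a b, rect_in_cube a b,
  rect_in_cube (padd a v) (padd b v) & disjoint_shift a b v].

Lemma transposable_unit_box a b v : transposable a b v ->
  unit_box a b /\ unit_box (padd a v) (padd b v).
Proof.
by move=> [hab hP hQ _]; split; apply/rect_in_cubeP => //; apply: is_rect_padd.
Qed.

Lemma unit_box_padd_sub a b v w : unit_box a b -> unit_box (padd a v) (padd b v) ->
  (forall l, w l = 0 \/ w l = v l) -> unit_box (padd a w) (padd b w).
Proof.
move=> hP hQ hw l; rewrite /padd; case: (hw l) => ->; last exact: hQ.
by rewrite !addr0; apply: hP.
Qed.

Lemma transposable_shift_neq0 a b v : transposable a b v -> exists j, v j != 0.
Proof.
move=> [hab _ _ hD]; apply/existsP/contraT; rewrite negb_exists => /forallP h0.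
have pv p : padd p v = p by apply/funext => l; rewrite /padd (eqP (negbNE (h0 l))) addr0.
have ha : in_rect a b a by apply/in_rectP => l; rewrite lexx hab.
by have := hD a; rewrite !pv ha.
Qed.

Lemma tau_in_cube a b v x :
  transposable a b v -> in_cube x -> in_cube (tau a b v x).
Proof.
move=> [_ hP hQ _] hx; rewrite tauE; case: ifP => h1.
  by apply: hQ; rewrite in_rect_padd psub_padd.
by case: ifP => // h2; apply: hP.
Qed.

Definition subrect a b a' b' := forall l, a' l <= a l /\ b l <= b' l.

Lemma subrect_refl a b : subrect a b a b.
Proof. by move=> l; split. Qed.

Lemma subrect_trans a b a1 b1 a2 b2 :
  subrect a b a1 b1 -> subrect a1 b1 a2 b2 -> subrect a b a2 b2.
Proof. by move=> h1 h2 l; have [? ?] := h1 l; have [? ?] := h2 l; split; lra. Qed.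

Lemma in_rect_subrect a b a' b' x :
  subrect a b a' b' -> in_rect a b x -> in_rect a' b' x.
Proof.
move=> hs /in_rectP hx; apply/in_rectP => l.
by have [? ?] := hs l; have /andP[? ?] := hx l; apply/andP; split; lra.
Qed.

Lemma subrect_padd a b a' b' v : subrect a b a' b' ->
  subrect (padd a v) (padd b v) (padd a' v) (padd b' v).
Proof. by move=> hs l; rewrite /padd; have [? ?] := hs l; split; lra. Qed.

Lemma transposable_subrect a b a' b' v : subrect a b a' b' -> is_rect a b ->
  transposable a' b' v -> transposable a b v.
Proof.
move=> hs hab [_ hP hQ hD]; split => //.
- by move=> x /(in_rect_subrect hs); apply: hP.
- by move=> x /(in_rect_subrect (subrect_padd v hs)); apply: hQ.
- move=> x; apply: contra (hD x) => /andP[h1 h2].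
  by rewrite (in_rect_subrect hs h1) (in_rect_subrect (subrect_padd v hs) h2).
Qed.

Definition set_coord p j c : pt := fun l => if l == j then c else p l.

Lemma set_coord_eq p j c : set_coord p j c j = c.
Proof. by rewrite /set_coord eqxx. Qed.

Lemma set_coord_ne p j c l : l != j -> set_coord p j c l = p l.
Proof. by rewrite /set_coord => /negbTE ->. Qed.

Section Slices.
Variables (a b : pt) (j : 'I_d) (c : R).
Hypothesis hc : a j <= c <= b j.

Lemma subrect_lower : subrect a (set_coord b j c) a b.
Proof.
move=> l; case: (eqVneq l j) => [->|ne]; last by rewrite set_coord_ne.
by rewrite set_coord_eq; case/andP: hc.
Qed.

Lemma subrect_upper : subrect (set_coord a j c) b a b.
Proof.
move=> l; case: (eqVneq l j) => [->|ne]; last by rewrite set_coord_ne.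
by rewrite set_coord_eq; case/andP: hc.
Qed.

Lemma in_rect_slices y :
  in_rect a b y = in_rect a (set_coord b j c) y || in_rect (set_coord a j c) b y.
Proof.
apply/idP/orP => [/in_rectP hy | [] hy].
- have /andP[hy1 hy2] := hy j; case: (ltrP (y j) c) => hyc; [left | right];
  apply/in_rectP => l; case: (eqVneq l j) => [->|ne]; rewrite ?set_coord_eq ?set_coord_ne //;
  by apply/andP; split.
- exact: in_rect_subrect subrect_lower hy.
- exact: in_rect_subrect subrect_upper hy.
Qed.

Lemma in_rect_slices_disjoint y :
  in_rect a (set_coord b j c) y -> in_rect (set_coord a j c) b y = false.
Proof.
move=> /in_rectP /(_ j); rewrite set_coord_eq => /andP[_ h1].
by apply/negbTE/negP => /in_rectP /(_ j); rewrite set_coord_eq => /andP[h2 _]; lra.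
Qed.

Lemma is_rect_lower : is_rect a b -> a j < c -> is_rect a (set_coord b j c).
Proof.
move=> hab hac l; case: (eqVneq l j) => [->|ne]; last by rewrite set_coord_ne.
by rewrite set_coord_eq.
Qed.

Lemma is_rect_upper : is_rect a b -> c < b j -> is_rect (set_coord a j c) b.
Proof.
move=> hab hcb l; case: (eqVneq l j) => [->|ne]; last by rewrite set_coord_ne.
by rewrite set_coord_eq.
Qed.

Lemma tau_split v : disjoint_shift a b v ->
  tau a b v =1 tau a (set_coord b j c) v \o tau (set_coord a j c) b v.
Proof.
move=> hD x /=; set b1 := set_coord b j c; set a2 := set_coord a j c.
have hdj := disjoint_shiftP hD.
have in1 y : in_rect a b1 y -> in_rect a b y by move/(in_rect_subrect subrect_lower).
have in2 y : in_rect a2 b y -> in_rect a b y by move/(in_rect_subrect subrect_upper).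
rewrite !tauE; case h1: (in_rect a b1 x).
  rewrite (in1 _ h1) (in_rect_slices_disjoint h1).
  have -> : in_rect a2 b (psub x v) = false.
    by apply/negbTE/negP => /in2; rewrite (hdj _ (in1 _ h1)).
  by rewrite h1.
case h2: (in_rect a2 b x).
  rewrite (in2 _ h2) psub_padd h1 /=; case: ifP => // /in1 h3.
  by have := hdj _ h3; rewrite psub_padd (in2 _ h2).
rewrite in_rect_slices h1 h2 /=; case h4: (in_rect a b1 (psub x v)).
  by rewrite (in1 _ h4) (in_rect_slices_disjoint h4) h1 h4.
case h5: (in_rect a2 b (psub x v)); last by rewrite in_rect_slices h4 h5 h1.
rewrite (in2 _ h5) /= h4; case: ifP => // /in1 h6.
by have := hdj _ (in2 _ h5); rewrite h6.
Qed.

End Slices.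

Definition shuffle_generated (f : pt -> pt) := exists s : seq (shuffle_data R d),
  forall x, in_cube x -> f x = shuffle_product s x.

Lemma shuffle_product_cat (s t : seq (shuffle_data R d)) x :
  shuffle_product (s ++ t) x = shuffle_product s (shuffle_product t x).
Proof. by elim: s => //= sh s IH; rewrite /shuffle_product /= -/(shuffle_product _ _) IH. Qed.

Lemma eq_shuffle_generated (f g : pt -> pt) :
  (forall x, in_cube x -> f x = g x) -> shuffle_generated g -> shuffle_generated f.
Proof. by move=> efg [s hs]; exists s => x hx; rewrite efg // hs. Qed.

Lemma shuffle_generated_comp_tau (f : pt -> pt) a b v : transposable a b v ->
  shuffle_generated f -> shuffle_generated (tau a b v) ->
  shuffle_generated (f \o tau a b v).
Proof.
move=> htr [s hs] [t ht]; exists (s ++ t) => x hx.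
by rewrite shuffle_product_cat -ht //= hs //; apply: tau_in_cube.
Qed.

Lemma tau_swap a b v : disjoint_shift a b v ->
  tau a b v =1 tau (padd a v) (padd b v) (fun l => - v l).
Proof.
move=> hD x; rewrite !tauE !in_rect_padd.
have -> : psub x (fun l => - v l) = padd x v by apply/funext => l; rewrite /psub /padd opprK.
have -> : padd x (fun l => - v l) = psub x v by [].
rewrite psub_padd; case: ifP => [h | _]; first by rewrite (disjoint_shiftP hD h).
by case: ifP.
Qed.

Lemma tau_conj a b v w : disjoint_shift a b v -> disjoint_shift a b w ->
  disjoint_shift (padd a w) (padd b w) (psub v w) ->
  let r := tau (padd a w) (padd b w) (psub v w) in
  tau a b v =1 r \o tau a b w \o r.
Proof.
move=> Dv Dw Dr r x /=.
have e1 y : psub (psub y (psub v w)) w = psub y v.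
  by apply/funext => l; rewrite /psub; lra.
have rE y : r y = if in_rect a b (psub y w) then padd y (psub v w)
    else if in_rect a b (psub y v) then psub y (psub v w) else y.
  by rewrite /r tauE !in_rect_padd e1.
have dv := disjoint_shiftP Dv; have dw := disjoint_shiftP Dw.
have dr y : in_rect a b (psub y w) -> in_rect a b (psub y v) = false.
  by move=> h; have := disjoint_shiftP Dr (y := y); rewrite !in_rect_padd e1; apply.
rewrite tauE; case: ifP => hx.
  have -> : r x = x by rewrite rE dw // dv.
  rewrite [tau a b w x]tauE hx rE psub_padd hx.
  by apply/funext => l; rewrite /padd /psub; lra.
case: ifP => hxv.
  have -> : r x = psub x (psub v w) by rewrite rE hxv; case: ifP => // /dr; rewrite hxv.
  have e2 : psub (psub x (psub v w)) w = psub x v by apply: e1.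
  have hy : in_rect a b (psub x (psub v w)) = false.
    by apply/negbTE/negP => /dw; rewrite e2 hxv.
  by rewrite [tau a b w _]tauE hy e2 hxv rE (dw _ hxv) (dv _ hxv).
case hxw: (in_rect a b (psub x w)); last first.
  have -> : r x = x by rewrite rE hxw hxv.
  by rewrite [tau a b w x]tauE hx hxw rE hxw hxv.
have -> : r x = padd x (psub v w) by rewrite rE hxw.
have e3 : psub (padd x (psub v w)) v = psub x w.
  by apply/funext => l; rewrite /padd /psub; lra.
have hy : in_rect a b (padd x (psub v w)) = false.
  by apply/negbTE/negP => /dv; rewrite e3 hxw.
have hyw : in_rect a b (psub (padd x (psub v w)) w) = false.
  by apply/negbTE/negP => /dr; rewrite e3 hxw.
rewrite [tau a b w _]tauE hy hyw rE hyw e3 hxw.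
by apply/funext => l; rewrite /padd /psub; lra.
Qed.

Definition in_slab i a b y := [forall l, (l != i) ==> (a l <= y l < b l)].

Lemma in_rect_slab i p q a b y :
  (forall l, l != i -> p l = a l) -> (forall l, l != i -> q l = b l) ->
  in_rect p q y = (p i <= y i < q i) && in_slab i a b y.
Proof.
move=> hp hq; apply/in_rectP/andP => [hy | [hyi /forallP hy] l].
  by split; [exact: hy | apply/forallP => l; apply/implyP => ne; rewrite -hp // -hq].
by case: (eqVneq l i) => [->//|ne]; have := implyP (hy l) ne; rewrite hp // hq.
Qed.

Lemma in_slab_shift i a b s y : in_slab i a b (shift_e i s y) = in_slab i a b y.
Proof. by apply: eq_forallb => l; rewrite /shift_e; case: eqVneq. Qed.

Lemma shift_e_at i s y : shift_e i s y i = y i + s.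
Proof. by rewrite /shift_e eqxx. Qed.

Lemma in_rect_slab_shift i s p q a b y :
  (forall l, l != i -> p l = a l) -> (forall l, l != i -> q l = b l) ->
  in_rect p q (shift_e i s y) = (p i <= y i + s < q i) && in_slab i a b y.
Proof. by move=> hp hq; rewrite (in_rect_slab _ hp hq) in_slab_shift shift_e_at. Qed.

Lemma restricted_shuffleE a b i c hab hc hac hcb y :
  restricted_shuffle (@ShuffleData R d a b i c hab hc hac hcb) y =
  if in_rect a b y then
    (if y i < c then shift_e i (b i - c) y else shift_e i (- (c - a i)) y)
  else y.
Proof. by []. Qed.

Section AxisTransposition.
Variables (a b v : pt) (i : 'I_d).
Hypotheses (hab : is_rect a b) (hP : unit_box a b)
  (hQ : unit_box (padd a v) (padd b v)) (hv : forall l, l != i -> v l = 0)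
  (hwidth : b i - a i <= v i).

Lemma padd_axis y : padd y v = shift_e i (v i) y.
Proof.
by apply/funext => l; rewrite /padd /shift_e; case: eqVneq => [-> //|/hv ->]; rewrite addr0.
Qed.

Lemma psub_axis y : psub y v = shift_e i (- v i) y.
Proof.
by apply/funext => l; rewrite /psub /shift_e; case: eqVneq => [-> //|/hv ->]; rewrite subr0.
Qed.

Lemma padd_axis_off p l : l != i -> padd p v l = p l.
Proof. by move=> /hv; rewrite /padd => ->; rewrite addr0. Qed.

Lemma is_rect_span : is_rect a (padd b v).
Proof.
move=> l; have := hab l; rewrite /padd; case: (eqVneq l i) => [->|/hv ->]; have := hwidth; lra.
Qed.

Lemma rect_in_cube_span : rect_in_cube a (padd b v).
Proof.
apply/(rect_in_cubeP is_rect_span) => l.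
by have [? _] := hP l; have [_ ?] := hQ l; split.
Qed.

Lemma tau_axis_adjacent : v i = b i - a i -> shuffle_generated (tau a b v).
Proof.
move=> ht; have hai : a i < b i := hab i.
have hbi : b i < padd b v i by rewrite /padd; lra.
exists [:: ShuffleData is_rect_span rect_in_cube_span hai hbi] => x _.
have ea l : l != i -> a l = a l by [].
have eb l : l != i -> b l = b l by [].
have eav := padd_axis_off a; have ebv := padd_axis_off b.
rewrite /shuffle_product /= restricted_shuffleE /tau (padd_axis x) (psub_axis x)
  !(in_rect_slab _ ea eb) !(in_rect_slab _ eav ebv) !(in_rect_slab _ ea ebv).
case: (in_slab i a b x); rewrite ?andbT ?andbF //= /padd.
by repeat case: ifP => ?; apply/funext => l; rewrite /shift_e; case: (eqVneq l i) => [->|//]; lra.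
Qed.

(* The first shuffle moves [P] onto [Q] and [[b_i, b_i + t)] down to [a_i]; the
   second one then moves the gap [[b_i, a_i + t)] back into place. *)
Lemma tau_axis_gap : b i - a i < v i -> shuffle_generated (tau a b v).
Proof.
move=> ht; have hai : a i < b i := hab i.
have hbi : b i < padd b v i by rewrite /padd; lra.
set b' := set_coord b i (a i + v i).
have hab' : is_rect a b' by apply: is_rect_lower => //; lra.
have hc' : rect_in_cube a b'.
  apply/rect_in_cubeP => // l; case: (eqVneq l i) => [->|ne]; last first.
    by rewrite /b' set_coord_ne //; apply: hP.
  by rewrite /b' set_coord_eq; have [? _] := hP i; have [_] := hQ i; rewrite /padd; split; lra.
have c1 : a i < a i + v i - (b i - a i) by lra.
have c2 : a i + v i - (b i - a i) < b' i by rewrite /b' set_coord_eq; lra.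
exists [:: ShuffleData hab' hc' c1 c2; ShuffleData is_rect_span rect_in_cube_span hai hbi].
move=> x _.
have ea l : l != i -> a l = a l by [].
have eb l : l != i -> b l = b l by [].
have eb' l : l != i -> b' l = b l by move=> ne; rewrite /b' set_coord_ne.
have eav := padd_axis_off a; have ebv := padd_axis_off b.
rewrite /shuffle_product /= [restricted_shuffle _ x]restricted_shuffleE /tau (padd_axis x)
  (psub_axis x) !(in_rect_slab _ ea eb) !(in_rect_slab _ eav ebv) !(in_rect_slab _ ea ebv).
case hx: (in_slab i a b x); rewrite ?andbT ?andbF /=; last first.
  by rewrite restricted_shuffleE (in_rect_slab _ ea eb') hx andbF.
rewrite /padd; repeat case: ifP => ?.
all: rewrite restricted_shuffleE ?(in_rect_slab_shift _ _ ea eb') ?(in_rect_slab _ ea eb')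
  ?shift_e_at hx ?andbT /b' set_coord_eq.
all: by repeat case: ifP => ?; apply/funext => l; rewrite /shift_e;
  case: (eqVneq l i) => [->|//]; lra.
Qed.

Lemma tau_axis_pos : shuffle_generated (tau a b v).
Proof.
case: (ltrP (b i - a i) (v i)) => ht; first exact: tau_axis_gap.
by apply: tau_axis_adjacent; have := hwidth; lra.
Qed.

End AxisTransposition.

Lemma tau_axis a b v i : transposable a b v -> (forall l, l != i -> v l = 0) ->
  b i - a i <= `|v i| -> shuffle_generated (tau a b v).
Proof.
move=> htr hv hw; have [hP hQ] := transposable_unit_box htr; have [hab _ _ hD] := htr.
case: (lerP 0 (v i)) => hs; first by apply: (tau_axis_pos (i := i)); rewrite // -(ger0_norm hs).
apply: eq_shuffle_generated (fun x _ => tau_swap hD x) _.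
have eva p : padd (padd p v) (fun l => - v l) = p by apply/funext => l; rewrite /padd addrK.
apply: (tau_axis_pos (i := i)); rewrite ?eva //.
- exact: is_rect_padd.
- by move=> l /hv ->; rewrite oppr0.
- by move: hw; rewrite ltr0_norm // /padd; lra.
Qed.


Lemma padd_psub_shift p v w : padd (padd p w) (psub v w) = padd p v.
Proof. by apply/funext => l; rewrite /padd /psub; lra. Qed.

Lemma transposable_partial_shift a b v w l : transposable a b v ->
  (forall k, w k = 0 \/ w k = v k) -> b l - a l <= `|w l| -> transposable a b w.
Proof.
move=> htr hw hl; have [hab hP _ _] := htr; have [hPb hQb] := transposable_unit_box htr.
split => //; last exact: disjoint_shift_sep hl.
by apply/(rect_in_cubeP (is_rect_padd w hab)); apply: unit_box_padd_sub.
Qed.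

Lemma transposable_rest_shift a b v w l : transposable a b w ->
  rect_in_cube (padd a v) (padd b v) -> b l - a l <= `|v l - w l| ->
  transposable (padd a w) (padd b w) (psub v w).
Proof.
move=> [hab _ hQ _] hQv hl; split; rewrite ?padd_psub_shift //; first exact: is_rect_padd.
by apply: (disjoint_shift_sep (l := l)); rewrite /padd /psub; lra.
Qed.

Lemma tau_separated n a b v : (#|support v| <= n)%N ->
  transposable a b v -> (forall j, v j != 0 -> b j - a j <= `|v j|) ->
  shuffle_generated (tau a b v).
Proof.
elim: n a b v => [|n IH] a b v hn htr hsep; have [j0 hj0] := transposable_shift_neq0 htr.
  have hpos : (0 < #|support v|)%N by apply/card_gt0P; exists j0; rewrite supportE.
  by have := leq_trans hpos hn.
set w := set_coord v j0 0.
have wj0 : w j0 = 0 by rewrite /w set_coord_eq.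
have wk k : k != j0 -> w k = v k by move=> ne; rewrite /w set_coord_ne.
have hwv k : w k = 0 \/ w k = v k by case: (eqVneq k j0) => [->|/wk]; [left | right].
have hsepw k : w k != 0 -> b k - a k <= `|w k|.
  by case: (hwv k) => ->; [rewrite eqxx | apply: hsep].
case: (boolP [exists l, w l != 0]) => [/existsP[l hl] | hw0]; last first.
  apply: (tau_axis (i := j0)) htr _ (hsep _ hj0) => l /wk <-.
  by move: hw0; rewrite negb_exists => /forallP/(_ l)/negbNE/eqP.
have [_ _ hQ hD] := htr.
have trw := transposable_partial_shift htr hwv (hsepw _ hl).
have hsep0 : b j0 - a j0 <= `|v j0 - w j0| by rewrite wj0 subr0; apply: hsep.
have trr := transposable_rest_shift trw hQ hsep0.
have gw : shuffle_generated (tau a b w).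
  apply: IH trw hsepw; rewrite -ltnS; apply: leq_trans hn.
  apply/proper_card/properP; split; last by exists j0; rewrite !supportE ?wj0 ?eqxx.
  by apply/subsetP => k; rewrite !supportE; case: (hwv k) => ->; rewrite ?eqxx.
have gr : shuffle_generated (tau (padd a w) (padd b w) (psub v w)).
  apply: (tau_axis (i := j0)) trr _ _ => [k /wk hk|]; first by rewrite /psub hk subrr.
  by rewrite /padd /psub wj0 !addr0 subr0; apply: hsep.
have [_ _ _ hDw] := trw; have [_ _ _ hDr] := trr.
apply: eq_shuffle_generated (fun x _ => tau_conj hD hDw hDr x) _.
by do 2 apply: shuffle_generated_comp_tau => //.
Qed.

Lemma tau_by_slices j a0 b0 v : v j != 0 ->
  (forall a b, subrect a b a0 b0 -> transposable a b v -> b j - a j <= `|v j| ->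
     shuffle_generated (tau a b v)) ->
  forall a b, subrect a b a0 b0 -> transposable a b v -> shuffle_generated (tau a b v).
Proof.
move=> hvj hslice a b hs htr; have hv : 0 < `|v j| by rewrite normr_gt0.
have [k hk] : exists k : nat, b j - a j <= k%:R * `|v j|.
  have [hab _ _ _] := htr; have habj := hab j.
  exists (Num.Def.archi_bound ((b j - a j) / `|v j|)); rewrite -ler_pdivrMr //.
  by apply/ltW/archi_boundP; apply: divr_ge0; lra.
elim: k a b hs htr hk => [|k IH] a b hs htr hk.
  by have [hab _ _ _] := htr; have := hab j; rewrite mul0r in hk; lra.
case: (lerP (b j - a j) `|v j|) => hw; first exact: hslice.
have [hab _ _ hD] := htr; set c := a j + `|v j|.
have hc : a j <= c <= b j by apply/andP; split; rewrite /c; lra.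
apply: eq_shuffle_generated (fun x _ => tau_split hc hD x) _.
have hlow : transposable a (set_coord b j c) v.
  by apply: transposable_subrect htr; [apply: subrect_lower | apply: is_rect_lower => //; rewrite /c; lra].
have hup : transposable (set_coord a j c) b v.
  by apply: transposable_subrect htr; [apply: subrect_upper | apply: is_rect_upper => //; rewrite /c; lra].
apply: (shuffle_generated_comp_tau hup).
  by apply: hslice (subrect_trans (subrect_lower hc) hs) hlow _; rewrite set_coord_eq /c; lra.
apply: IH (subrect_trans (subrect_upper hc) hs) hup _.
by rewrite set_coord_eq /c; move: hk; rewrite -natr1 mulrDl mul1r; lra.
Qed.

Definition unseparated a b v := [pred j | (v j != 0) && (`|v j| < b j - a j)].

Lemma tau_generated n a b v : (#|unseparated a b v| <= n)%N ->
  transposable a b v -> shuffle_generated (tau a b v).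
Proof.
elim: n a b v => [|n IH] a b v hn htr.
  apply: (tau_separated (n := d)) htr _ => [|j hj].
    by rewrite -[X in (_ <= X)%N]card_ord max_card.
  move: hn; rewrite leqn0 => /eqP/card0_eq/(_ j); rewrite /unseparated !inE hj /=.
  by move/negbT; rewrite -leNgt.
case: (leqP #|unseparated a b v| n) => hle; first exact: IH.
have [j hj] : exists j, j \in unseparated a b v.
  by apply/card_gt0P; apply: leq_ltn_trans hle.
move: (hj); rewrite /unseparated inE => /andP[hvj _].
apply: (tau_by_slices hvj _ (subrect_refl a b) htr) => a' b' hs htr' hw.
apply: IH htr'; rewrite -ltnS; apply: leq_trans hn; apply/proper_card/properP; split.
  apply/subsetP => k; rewrite /unseparated !inE => /andP[-> hk] /=.
  by have [? ?] := hs k; lra.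
by exists j => //; rewrite /unseparated inE negb_and -leNgt hw orbT.
Qed.

End Transpositions.

Theorem mainTheorem17 (R : realType) (d : nat) (hd : (1 <= d)%N)
    (a b v : point R d) :
  is_rect a b ->
  rect_in_cube a b ->
  rect_in_cube (padd a v) (padd b v) ->
  (forall x, ~~ (in_rect a b x && in_rect (padd a v) (padd b v) x)) ->
  exists s : seq (shuffle_data R d),
    forall x, in_cube x -> tau a b v x = shuffle_product s x.
Proof.
move=> hab hP hQ hD; apply: (tau_generated (n := d)); last by split.
by rewrite -[X in (_ <= X)%N]card_ord max_card.
Qed.
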